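(* Let $G$ be a claw-free graph and let $C$, $C_0$ be even holes of $G$. If $C$ is compatible with $C_0$, then $C$ is compatible with every even hole $C'\in\langle C_0\rangle$.
   Context: A hole is an induced cycle of length $\ge4$; even hole: even length. Claw-free: no induced $K_{1,3}$. Two even holes $C,C'$ are compatible iff $G[C\cup C']$ is a disconnected graph whose components are $G[C]$ and $G[C']$ (i.e., they are disjoint and no edge joins them). Single-vertex deformation: if $C$ is an even hole and $\mathbf{j}\notin C$ has $\Gamma_C(\mathbf{j})=\{\mathbf{u},\mathbf{k},\mathbf{v}\}$ with $\mathbf{u},\mathbf{v}$ the two neighbours of $\mathbf{k}$ in $C$, then $(C\setminus\{\mathbf{k}\})\cup\{\mathbf{j}\}$ is a single-vertex deformation of $C$. The deformation closure $\langle C_0\rangle$ is the smallest set of holes containing $C_0$ closed under single-vertex deformations. *)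

From mathcomp Require Import all_boot.
Set Implicit Arguments. Unset Strict Implicit. Unset Printing Implicit Defensive.

Section Graphs.
Variables (T : finType) (e : rel T).

Definition simple_graph : Prop := symmetric e /\ irreflexive e.

Definition claw_free : Prop :=
  forall v a b c : T,
    e v a -> e v b -> e v c ->
    a != b -> a != c -> b != c ->
    ~~ e a b -> ~~ e a c -> ~~ e b c -> False.

Definition nbhd_in (C : {set T}) (x : T) : {set T} := [set y in C | e x y].

Definition induced_rel (C : {set T}) : rel T :=
  [rel x y | [&& x \in C, y \in C & e x y]].

Definition induced_cycle (C : {set T}) : Prop :=
  (forall x, x \in C -> #|nbhd_in C x| = 2) /\
  (forall x y, x \in C -> y \in C -> connect (induced_rel C) x y).

Definition hole (C : {set T}) : Prop := induced_cycle C /\ 4 <= #|C|.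
Definition even_hole (C : {set T}) : Prop := hole C /\ ~~ odd #|C|.

Definition compatible (C C' : {set T}) : Prop :=
  [disjoint C & C'] /\ (forall x y, x \in C -> y \in C' -> ~~ e x y).

Definition single_vertex_deformation (C C' : {set T}) : Prop :=
  even_hole C /\
  exists j u k v : T,
    [/\ j \notin C, k \in C, u != v,
        nbhd_in C k = [set u; v] &
        nbhd_in C j = [set u; k; v]] /\
    C' = j |: (C :\ k).

Inductive deformation_closure (C0 : {set T}) : {set T} -> Prop :=
  | dc_base : deformation_closure C0 C0
  | dc_step : forall C C', deformation_closure C0 C ->
      single_vertex_deformation C C' -> deformation_closure C0 C'.

End Graphs.

From mathcomp Require Import all_boot.
Set Implicit Arguments. Unset Strict Implicit. Unset Printing Implicit Defensive.

(* A deformation of C1 replaces k by a vertex j adjacent to k and to the two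
   neighbours u, v of k on C1; u and v are non-adjacent since a hole has no
   triangle.  If j were adjacent to a vertex x of a hole C compatible with C1,
   then x, u, v would be pairwise non-adjacent neighbours of j, a claw.  So j
   is neither in C nor adjacent to it, and compatibility with C survives each
   deformation step. *)

Section Deformation.
Variables (T : finType) (e : rel T).
Hypotheses (e_sym : symmetric e) (e_irr : irreflexive e).

Lemma induced_cycle_nbhdE (C : {set T}) x a b :
  induced_cycle e C -> x \in C -> a != b ->
  a \in nbhd_in e C x -> b \in nbhd_in e C x -> nbhd_in e C x = [set a; b].
Proof.
move=> [deg2 _] xC ab aN bN; apply/esym/eqP.
rewrite eqEcard cards2 ab deg2 // andbT.
by apply/subsetP => y /set2P[] ->.
Qed.

Lemma induced_cycle_triangle (C : {set T}) u k v :
  induced_cycle e C -> u \in C -> k \in C -> v \in C ->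
  e u k -> e k v -> e u v -> C \subset [set u; k; v].
Proof.
move=> cycC uC kC vC euk ekv euv.
have neq x y : e x y -> x != y by apply: contraTneq => ->; rewrite e_irr.
have in_nbhd x y : e x y -> y \in C -> y \in nbhd_in e C x.
  by move=> exy yC; rewrite inE yC.
have nbhd_sub x : x \in [set u; k; v] -> nbhd_in e C x \subset [set u; k; v].
  rewrite !inE -orbA => /or3P[] /eqP ->.
  - rewrite (induced_cycle_nbhdE cycC uC (neq _ _ ekv) (in_nbhd _ _ euk kC)
               (in_nbhd _ _ euv vC)).
    by apply/subsetP => y /set2P[] ->; rewrite !inE eqxx ?orbT.
  - rewrite (induced_cycle_nbhdE cycC kC (neq _ _ euv) (in_nbhd _ _ _ uC)
               (in_nbhd _ _ ekv vC)); last by rewrite e_sym.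
    by apply/subsetP => y /set2P[] ->; rewrite !inE eqxx ?orbT.
  - rewrite (induced_cycle_nbhdE cycC vC (neq _ _ euk) (in_nbhd _ _ _ uC)
               (in_nbhd _ _ _ kC)) ?(e_sym v) //.
    by apply/subsetP => y /set2P[] ->; rewrite !inE eqxx ?orbT.
have S_closed : closed (induced_rel e C) (mem [set u; k; v]).
  have step x y : e x y -> y \in C -> x \in [set u; k; v] -> y \in [set u; k; v].
    by move=> exy yC /nbhd_sub/subsetP; apply; rewrite inE yC.
  move=> x y /and3P[xC yC exy] /=; apply/idP/idP; first exact: step.
  by apply: step; rewrite // e_sym.
apply/subsetP => y yC.
by rewrite -(closed_connect S_closed (cycC.2 u y uC yC)) !inE eqxx.
Qed.

Lemma hole_triangle_free (C : {set T}) u k v :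
  hole e C -> u \in C -> k \in C -> v \in C -> e u k -> e k v -> ~~ e u v.
Proof.
move=> [cycC C_ge4] uC kC vC euk ekv; apply/negP => euv.
have C_sub := induced_cycle_triangle cycC uC kC vC euk ekv euv.
have := leq_trans C_ge4 (subset_leq_card C_sub).
by rewrite -setUA cardsU1 cards2; case: (_ \notin _); case: (k != v).
Qed.

Lemma hole_nbhd_nonadjacent (C : {set T}) k u v :
  hole e C -> k \in C -> nbhd_in e C k = [set u; v] -> ~~ e u v.
Proof.
move=> holeC kC nk.
have /[!inE]/andP[uC eku] : u \in nbhd_in e C k by rewrite nk set21.
have /[!inE]/andP[vC ekv] : v \in nbhd_in e C k by rewrite nk set22.
by apply: (hole_triangle_free holeC uC kC vC); rewrite // e_sym.
Qed.

Lemma compatible_subset (C D D' : {set T}) :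
  D' \subset D -> compatible e C D -> compatible e C D'.
Proof.
move=> sD [disCD noedge]; split=> [|x y xC /(subsetP sD)].
- exact: disjointWr sD disCD.
- exact: noedge.
Qed.

Lemma compatible_setU1 (C D : {set T}) j :
  j \notin C -> (forall x, x \in C -> ~~ e x j) ->
  compatible e C D -> compatible e C (j |: D).
Proof.
move=> jC no_j [disCD noedge]; split=> [|x y xC /setU1P[-> | yD]].
- rewrite disjoint_sym (eq_disjoint (fun x => in_setU1 x j D)) disjointU1.
  by rewrite jC disjoint_sym.
- exact: no_j.
- exact: noedge.
Qed.

Hypothesis e_claw_free : claw_free e.

Lemma compatible_deformation (C C1 C2 : {set T}) :
  compatible e C C1 -> single_vertex_deformation e C1 C2 -> compatible e C C2.
Proof.
move=> compC1 [[holeC1 _] [j [u [k [v [[jC1 kC1 uv nk nj] ->]]]]]].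
have [disC1 noedge] := compC1.
have nbhd_j y : y \in [set u; k; v] -> e j y /\ y \in C1.
  by rewrite -nj inE => /andP[].
have [eju uC1] : e j u /\ u \in C1 by apply: nbhd_j; rewrite !inE eqxx.
have [ejk _] : e j k /\ k \in C1 by apply: nbhd_j; rewrite !inE eqxx ?orbT.
have [ejv vC1] : e j v /\ v \in C1 by apply: nbhd_j; rewrite !inE eqxx ?orbT.
have neqC1 x y : x \in C -> y \in C1 -> x != y.
  by move=> xC yC1; apply: contraTneq yC1 => <-; rewrite (disjointFr disC1).
apply: compatible_setU1; last exact: compatible_subset (subsetDl C1 [set k]) _.
- by apply: contraTN ejk => jC; exact: noedge.
- move=> x xC; apply/negP => exj.
  have ejx : e j x by rewrite e_sym.
  apply: (e_claw_free ejx eju ejv (neqC1 _ _ xC uC1) (neqC1 _ _ xC vC1) uv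
            (noedge _ _ xC uC1) (noedge _ _ xC vC1)).
  exact: hole_nbhd_nonadjacent holeC1 kC1 nk.
Qed.

End Deformation.

Theorem corollary5 (T : finType) (e : rel T) :
  simple_graph e -> claw_free e ->
  forall C C0 : {set T},
    even_hole e C -> even_hole e C0 -> compatible e C C0 ->
    forall C' : {set T}, deformation_closure e C0 C' -> even_hole e C' ->
      compatible e C C'.
Proof.
move=> [e_sym e_irr] e_claw_free C C0 _ _ compC0 C' closureC' _.
elim: closureC' => // C1 C2 _ compC1.
exact: (compatible_deformation e_sym e_irr e_claw_free compC1).
Qed.
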